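(* Let $A$ be a partially ordered set with top element $\top$ and bottom element $\bot$. For games over $A$, each left equivalence class has a unique maximal element with respect to $\le$ (up to equivalence $\equiv$), and these maximal elements are precisely the games that are right equivalent to $\top$.
   Context: Games over a poset $A$ are defined inductively: for each $a\in A$ there is an atomic game $[a]$, which has no options; and if $L$ and $R$ are non-empty sets of games, then $\{L\mid R\}$ is a composite game with left options $L$ and right options $R$; $\{S,L\mid R\}$ denotes the game with left options $S\cup L$ and right options $R$. The relations $\le$ and $\lhd$ are defined by simultaneous recursion: $G\le H$ iff (1) every left option $G^L$ of $G$ satisfies $G^L\lhd H$, (2) every right option $H^R$ of $H$ satisfies $G\lhd H^R$, and (3) if $G$ or $H$ is atomic then $G\lhd H$; and $G\lhd H$ iff (1) some right option $G^R$ of $G$ satisfies $G^R\le H$, or (2) some left option $H^L$ of $H$ satisfies $G\le H^L$, or (3) $G=[a]$, $H=[b]$ are atomic and $a\le b$. $G\equiv H$ means $G\le H$ and $H\le G$. For games $H,K$: $H\le_L K$ if $\{H,L\mid R\}\le\{K,L\mid R\}$ for every (possibly empty) set of games $L$ and every non-empty set of games $R$; $H\le_R K$ if $\{L\mid R,H\}\le\{L\mid R,K\}$ for every set of games $R$ and every non-empty set of games $L$. $H$ and $K$ are left equivalent if $H\le_L K$ and $K\le_L H$, and right equivalent if $H\le_R K$ and $K\le_R H$. *)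

From HB Require Import structures.
From mathcomp Require Import all_boot all_order.
Set Implicit Arguments. Unset Strict Implicit. Unset Printing Implicit Defensive.
Import Order.TTheory.
Local Open Scope order_scope.

(* Games over A.  A composite game {L | R} is given by two families of
   options indexed by arbitrary (non-empty) types; the option *sets* are the
   images of these families. *)
Inductive game (A : Type) : Type :=
| Atom : A -> game A
| Comp : forall (IL : Type), (IL -> game A) ->
         forall (IR : Type), (IR -> game A) ->
         inhabited IL -> inhabited IR -> game A.

Arguments Atom {A} _.

Definition is_atom {A} (G : game A) : Prop :=
  match G with Atom _ => True | _ => False end.

Definition leftopt {A} (X G : game A) : Prop :=
  match G with
  | Atom _ => False
  | Comp _ L _ _ _ _ => exists i, L i = X
  end.

Definition rightopt {A} (X G : game A) : Prop :=
  match G with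
  | Atom _ => False
  | Comp _ _ _ R _ _ => exists j, R j = X
  end.

Section Order.
Context {d : Order.disp_t} {A : porderType d}.

(* G <= H and G <| H, defined by simultaneous (well-founded) recursion;
   rendered as a mutual inductive, whose clauses are exactly the defining
   clauses (games are well-founded, so the solution is unique). *)
Inductive gle : game A -> game A -> Prop :=
| gle_intro G H :
    (forall GL, leftopt GL G -> glf GL H) ->
    (forall HR, rightopt HR H -> glf G HR) ->
    (is_atom G \/ is_atom H -> glf G H) ->
    gle G H
with glf : game A -> game A -> Prop :=
| glf_right G H GR : rightopt GR G -> gle GR H -> glf G H
| glf_left G H HL : leftopt HL H -> gle G HL -> glf G H
| glf_atom (a b : A) : a <= b -> glf (Atom a) (Atom b).

Definition geqv (G H : game A) : Prop := gle G H /\ gle H G.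

Definition addL (H : game A) (IL : Type) (L : IL -> game A)
    (IR : Type) (R : IR -> game A) (hR : inhabited IR) : game A :=
  @Comp A (option IL) (fun o => match o with None => H | Some i => L i end)
    IR R (inhabits None) hR.

Definition addR (H : game A) (IL : Type) (L : IL -> game A) (hL : inhabited IL)
    (IR : Type) (R : IR -> game A) : game A :=
  @Comp A IL L (option IR)
    (fun o => match o with None => H | Some j => R j end) hL (inhabits None).

Definition leL (H K : game A) : Prop :=
  forall (IL : Type) (L : IL -> game A) (IR : Type) (R : IR -> game A)
         (hR : inhabited IR),
    gle (addL H L R hR) (addL K L R hR).

Definition leR (H K : game A) : Prop :=
  forall (IL : Type) (L : IL -> game A) (hL : inhabited IL)
         (IR : Type) (R : IR -> game A),
    gle (addR H L hL R) (addR K L hL R).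

Definition left_equiv (H K : game A) : Prop := leL H K /\ leL K H.
Definition right_equiv (H K : game A) : Prop := leR H K /\ leR K H.

Definition max_in_left_class (M G : game A) : Prop :=
  left_equiv M G /\ forall K, left_equiv K G -> gle M K -> gle K M.

End Order.

From HB Require Import structures.
From mathcomp Require Import all_boot all_order.
Import Order.TTheory.

(* Comparing {H, L | R} with {K, L | R}, everything but the left option H
   matches trivially, so H <=_L K amounts to H <| {K, L | R} for all L and R.
   As {K | [bot]} is one of these games and lies below all the others, this is
   just H <| {K | [bot]}.  Hence a game M with [top] <| M lies above every K
   with K <=_L M: the left options of K lie below [top], and a right option
   KR <= {M | [bot]} of K lies below every right option of M.  So such an M is
   the maximum of its left class, and {[top] | {G | [bot]}} is such a game,
   left equivalent to G.  Dually, [top] <| M says exactly that M is right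
   equivalent to [top]. *)

Definition opt {A} (X G : game A) := leftopt X G \/ rightopt X G.

Lemma game_opt_ind {A} (P : game A -> Prop) :
  (forall G, (forall X, opt X G -> P X) -> P G) -> forall G, P G.
Proof.
move=> IH; elim=> [a|IL L IHL IR R IHR hL hR]; apply: IH => X; first by case.
by case=> [[i <-]|[j <-]].
Qed.

Section GameOrder.
Context {d : Order.disp_t} {A : porderType d}.
Implicit Types (G H K X : game A) (a b : A).

Lemma gle_leftopt {G H GL} : gle G H -> leftopt GL G -> glf GL H.
Proof. by case=> {}G {}H hL _ _; apply: hL. Qed.

Lemma gle_rightopt {G H HR} : gle G H -> rightopt HR H -> glf G HR.
Proof. by case=> {}G {}H _ hR _; apply: hR. Qed.

Lemma gle_atom_glf {G H} : gle G H -> is_atom G \/ is_atom H -> glf G H.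
Proof. by case=> {}G {}H _ _ hA; apply: hA. Qed.

Lemma glf_inv {G H} : glf G H ->
  [\/ exists2 GR, rightopt GR G & gle GR H,
      exists2 HL, leftopt HL H & gle G HL
    | exists a b, [/\ G = Atom a, H = Atom b & (a <= b)%O]].
Proof.
case=> [{}G {}H GR oGR hGR|{}G {}H HL oHL hHL|a b ab].
- by apply: Or31; exists GR.
- by apply: Or32; exists HL.
- by apply: Or33; exists a, b.
Qed.

Lemma gle_Atom {a b} : (a <= b)%O -> gle (Atom a) (Atom b).
Proof. by move=> ab; constructor=> // _; apply: glf_atom. Qed.

Lemma gle_refl G : gle G G.
Proof.
elim/(@game_opt_ind A): G => G IH; constructor.
- by move=> GL oGL; apply: glf_left oGL (IH _ (or_introl oGL)).
- by move=> GR oGR; apply: glf_right oGR (IH _ (or_intror oGR)).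
- by case: G {IH} => [a|IL L IR R hL hR] [] //= _; apply: glf_atom.
Qed.

(* Each of the three laws needs the others on smaller triples, so they are
   proved together by induction on G, then H, then K. *)
Lemma game_trans G H K :
  (gle G H -> gle H K -> gle G K) /\
  (glf G H -> gle H K -> glf G K) /\
  (gle G H -> glf H K -> glf G K).
Proof.
elim/(@game_opt_ind A): G H K => G IHG H; elim/(@game_opt_ind A): H => H IHH K.
elim/(@game_opt_ind A): K => K IHK.
have glf_gle : glf G H -> gle H K -> glf G K.
  case/glf_inv=> [[GR oGR hGR]|[HL oHL hHL]|[a [b [eG eH ab]]]] hHK.
  - exact: glf_right oGR ((IHG _ (or_intror oGR) H K).1 hGR hHK).
  - exact: (IHH _ (or_introl oHL) K).2.2 hHL (gle_leftopt hHK oHL).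
  - subst G H; case/glf_inv: (gle_atom_glf hHK (or_introl I)).
    + by case=> ? [].
    + move=> [KL oKL hKL].
      exact: glf_left oKL ((IHK _ (or_introl oKL)).1 (gle_Atom ab) hKL).
    + by case=> _ [c [[<-] -> bc]]; apply/glf_atom/(le_trans ab).
have gle_glf : gle G H -> glf H K -> glf G K.
  move=> hGH; case/glf_inv=> [[HR oHR hHR]|[KL oKL hKL]|[b [c [eH eK bc]]]].
  - exact: (IHH _ (or_intror oHR) K).2.1 (gle_rightopt hGH oHR) hHR.
  - exact: glf_left oKL ((IHK _ (or_introl oKL)).1 hGH hKL).
  - subst H K; case/glf_inv: (gle_atom_glf hGH (or_intror I)).
    + move=> [GR oGR hGR].
      have [trans_GR _] := IHG _ (or_intror oGR) (Atom b) (Atom c).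
      exact: glf_right oGR (trans_GR hGR (gle_Atom bc)).
    + by case=> ? [].
    + by case=> a [_ [-> [<-] ab]]; apply/glf_atom/(le_trans ab).
split=> // hGH hHK; constructor.
- move=> GL oGL.
  exact: (IHG _ (or_introl oGL) H K).2.1 (gle_leftopt hGH oGL) hHK.
- move=> KR oKR; exact: (IHK _ (or_intror oKR)).2.2 hGH (gle_rightopt hHK oKR).
- case=> hA; first exact: glf_gle (gle_atom_glf hGH (or_introl hA)) hHK.
  exact: gle_glf hGH (gle_atom_glf hHK (or_intror hA)).
Qed.

Lemma gle_trans {G H K} : gle G H -> gle H K -> gle G K.
Proof. exact: (game_trans G H K).1. Qed.

Lemma glf_gle_trans {G H K} : glf G H -> gle H K -> glf G K.
Proof. exact: (game_trans G H K).2.1. Qed.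

Lemma gle_glf_trans {G H K} : gle G H -> glf H K -> glf G K.
Proof. exact: (game_trans G H K).2.2. Qed.

End GameOrder.

Section TopBottom.
Local Open Scope order_scope.
Context {d : Order.disp_t} {A : tbPOrderType d}.
Implicit Types (G H K M X : game A).

Lemma gle_bot X : gle (Atom \bot) X.
Proof.
suff [] : gle (Atom \bot) X /\ glf (Atom \bot) X by [].
elim/(@game_opt_ind A): X => X IH.
have glf_bot : glf (Atom \bot) X.
  case: X IH => [b|IL L IR R [i] hR] IH; first exact/glf_atom/le0x.
  have oL : leftopt (L i) (Comp L R (inhabits i) hR) by exists i.
  exact: glf_left oL (IH _ (or_introl oL)).1.
by split=> //; constructor=> // XR oXR; apply: (IH _ (or_intror oXR)).2.
Qed.

Lemma gle_top X : gle X (Atom \top).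
Proof.
suff [] : gle X (Atom \top) /\ glf X (Atom \top) by [].
elim/(@game_opt_ind A): X => X IH.
have glf_top : glf X (Atom \top).
  case: X IH => [b|IL L IR R hL [j]] IH; first exact/glf_atom/lex1.
  have oR : rightopt (R j) (Comp L R hL (inhabits j)) by exists j.
  exact: glf_right oR (IH _ (or_intror oR)).1.
by split=> //; constructor=> // XL oXL; apply: (IH _ (or_introl oXL)).2.
Qed.

Definition lprobe K : game A :=
  addL K (fun e : Empty_set => match e with end) (fun _ : unit => Atom \bot)
    (inhabits tt).

Lemma lprobe_leftopt K : leftopt K (lprobe K).
Proof. by exists None. Qed.

Lemma glf_lprobe K X : glf (lprobe K) X.
Proof. by apply: (glf_right (GR := Atom \bot)) (gle_bot X); exists tt. Qed.

Lemma gle_lprobe {K X} : glf K X -> gle (lprobe K) X.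
Proof.
move=> hKX; constructor=> [_ [[[]|] <-] //|XR _|_]; exact: glf_lprobe.
Qed.

Lemma leLP H K : leL H K <-> glf H (lprobe K).
Proof.
split=> [hHK | hH IL L IR R hR].
  exact: gle_leftopt (hHK _ _ _ _ (inhabits tt)) (lprobe_leftopt H).
have oK : leftopt K (addL K L R hR) by exists None.
constructor=> [_ [[i|] <-] /=|HR oHR|[]//].
- by apply: (glf_left (HL := L i)); [exists (Some i) | apply: gle_refl].
- exact: glf_gle_trans hH (gle_lprobe (glf_left oK (gle_refl K))).
- by apply: (glf_right (GR := HR)) (gle_refl HR).
Qed.

Lemma leL_refl H : leL H H.
Proof. by move=> *; apply: gle_refl. Qed.

Lemma leL_trans {H K M} : leL H K -> leL K M -> leL H M.
Proof.
move=> hHK hKM IL L IR R hR.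
exact: gle_trans (hHK IL L IR R hR) (hKM IL L IR R hR).
Qed.

Lemma top_glf_glf {M} X : glf (Atom \top) M -> glf X M.
Proof. exact: gle_glf_trans (gle_top X). Qed.

Lemma top_glf_leL_gle {K M} : glf (Atom \top) M -> leL K M -> gle K M.
Proof.
move=> hM /leLP; case/glf_inv=> [[KR oKR hKR]|[_ [[[]|] <-] //]|[? [? [_ //]]]].
constructor=> [KL _|MR oMR|_]; try exact: top_glf_glf.
exact: glf_right oKR (gle_trans hKR (gle_lprobe (glf_right oMR (gle_refl MR)))).
Qed.

Definition lmax G : game A :=
  Comp (fun _ : unit => Atom \top) (fun _ : unit => lprobe G)
    (inhabits tt) (inhabits tt).

Lemma top_glf_lmax G : glf (Atom \top) (lmax G).
Proof. by apply: (glf_left (HL := Atom \top)) (gle_refl _); exists tt. Qed.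

Lemma left_equiv_lmax G : left_equiv (lmax G) G.
Proof.
split; apply/leLP.
  by apply: (glf_right (GR := lprobe G)) (gle_refl _); exists tt.
apply: glf_left (lprobe_leftopt _) _.
constructor=> [GL _|_ [[] <-]|_]; try exact: top_glf_glf (top_glf_lmax G).
exact: glf_left (lprobe_leftopt G) (gle_refl G).
Qed.

Lemma max_in_left_classP M G :
  max_in_left_class M G <-> left_equiv M G /\ glf (Atom \top) M.
Proof.
split=> [[[hMG hGM] hmax] | [[hMG hGM] hM]]; last first.
  by split=> // K [hKG _] _; apply: top_glf_leL_gle hM (leL_trans hKG hGM).
have [hlG hGl] := left_equiv_lmax G.
have hMl : gle M (lmax G).
  exact: top_glf_leL_gle (top_glf_lmax G) (leL_trans hMG hGl).
split=> //; apply: gle_leftopt (hmax _ (conj hlG hGl) hMl) _.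
by exists tt.
Qed.

Lemma max_in_left_class_geqv G M M' :
  max_in_left_class M G -> max_in_left_class M' G -> geqv M M'.
Proof.
move=> /max_in_left_classP [[hMG hGM] hM] /max_in_left_classP [[hM'G hGM'] hM'].
split; first exact: top_glf_leL_gle hM' (leL_trans hMG hGM').
exact: top_glf_leL_gle hM (leL_trans hM'G hGM).
Qed.

Lemma leRE H K :
  leR H K <-> forall IL (L : IL -> game A) hL IR (R : IR -> game A),
    glf (addR H L hL R) K.
Proof.
split=> [hHK IL L hL IR R | hHK IL L hL IR R].
  by apply: gle_rightopt (hHK IL L hL IR R) _; exists None.
constructor=> [_ [i <-]|_ [[j|] <-] /=|[]//].
- by apply: (glf_left (HL := L i)) (gle_refl _); exists i.
- by apply: (glf_right (GR := R j)) (gle_refl _); exists (Some j).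
- exact: hHK.
Qed.

Lemma leR_top M : leR M (Atom \top).
Proof.
by apply/leRE=> *; apply: (glf_right (GR := M)) (gle_top M); exists None.
Qed.

Lemma leR_topP M : leR (Atom \top) M <-> glf (Atom \top) M.
Proof.
split=> [/leRE hM | hM]; last by apply/leRE=> *; apply: top_glf_glf.
apply: gle_glf_trans (hM unit (fun _ => Atom \top) (inhabits tt)
                         Empty_set (fun e => match e with end)).
constructor=> [//|_ [[[]|] <-] /=|_]; first exact/glf_atom/lexx.
by apply: (glf_left (HL := Atom \top)) (gle_refl _); exists tt.
Qed.

Lemma right_equiv_topP M : right_equiv M (Atom \top) <-> glf (Atom \top) M.
Proof.
by split=> [[_ /leR_topP] // | /leR_topP hM]; split=> //; apply: leR_top.
Qed.

End TopBottom.

Theorem lemma5p14 (d : Order.disp_t) (A : tbPOrderType d) :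
  (forall G : game A, exists M, max_in_left_class M G) /\
  (forall G M M' : game A,
      max_in_left_class M G -> max_in_left_class M' G -> geqv M M') /\
  (forall M : game A,
      max_in_left_class M M <-> right_equiv M (Atom (\top)%O)).
Proof.
split.
  move=> G; exists (lmax G).
  apply/max_in_left_classP.
  by split; [apply: left_equiv_lmax | apply: top_glf_lmax].
split; first exact: max_in_left_class_geqv.
move=> M; split=> [/max_in_left_classP [_ hM] | /right_equiv_topP hM].
  exact/right_equiv_topP.
by apply/max_in_left_classP; split=> //; split; apply: leL_refl.
Qed.
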